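(* If $(S,K,I)$ is a split graph, then the factor graph $\Phi(S)$ cannot contain an induced path $v_1v_2v_3v_4$ with $\sigma_{23}=1$ and $d_1\leq d_2\leq d_4$.
   Context: A split graph $(S,K,I)$ is a graph $S$ together with a fixed partition $V(S)=K\dot\cup I$, where $K$ is a clique and $I$ is an independent set. For a vertex $v_i$ of $S$, $N_i$ denotes its open neighborhood in $S$ and $d_i=|N_i|$; $\eta_{uv}=|N_u\cap N_v|$. The factor graph $\Phi(S)$ is the loopless multigraph with vertex set $I$ in which, for distinct $u,v\in I$, there is one edge joining $u$ and $v$ for each 2-switch of $S$ acting on $u$ and $v$ (a 2-switch replaces edges $ab,cd$ with $ac,bd$ when $ab,cd\in E(S)$ and $ac,bd\notin E(S)$); equivalently, the multiplicity of $uv$ is $\sigma_{uv}=(d_u-\eta_{uv})(d_v-\eta_{uv})$, and $u,v$ are adjacent iff $\sigma_{uv}>0$; $\sigma_{ij}$ denotes $\sigma_{v_iv_j}$. An induced path in $\Phi(S)$ consists of distinct vertices with consecutive ones adjacent and no other pair adjacent (multiplicities ignored). *)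

From mathcomp Require Import all_boot.
Set Implicit Arguments.
Unset Strict Implicit.
Unset Printing Implicit Defensive.

Definition simple_graph (T : finType) (e : rel T) : Prop :=
  symmetric e /\ irreflexive e.

Definition split_graph (T : finType) (e : rel T) (K I : {set T}) : Prop :=
  [/\ simple_graph e,
      K :|: I = [set: T],
      K :&: I = set0,
      {in K &, forall u v, u != v -> e u v} &
      {in I &, forall u v, ~~ e u v}].

Definition nbhd (T : finType) (e : rel T) (v : T) : {set T} := [set w | e v w].
Definition deg (T : finType) (e : rel T) (v : T) : nat := #|nbhd e v|.
Definition eta (T : finType) (e : rel T) (u v : T) : nat :=
  #|nbhd e u :&: nbhd e v|.

(* multiplicity of the edge uv of the factor graph Phi(S) *)
Definition sigma (T : finType) (e : rel T) (u v : T) : nat :=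
  (deg e u - eta e u v) * (deg e v - eta e u v).

(* adjacency in Phi(S) (vertex set I, loopless, multiplicities ignored) *)
Definition phi_adj (T : finType) (e : rel T) (I : {set T}) (u v : T) : bool :=
  [&& u \in I, v \in I, u != v & 0 < sigma e u v].

Definition phi_induced_P4 (T : finType) (e : rel T) (I : {set T})
  (v1 v2 v3 v4 : T) : Prop :=
  [/\ [/\ v1 \in I, v2 \in I, v3 \in I & v4 \in I],
      uniq [:: v1; v2; v3; v4],
      [/\ phi_adj e I v1 v2, phi_adj e I v2 v3 & phi_adj e I v3 v4] &
      [/\ ~~ phi_adj e I v1 v3, ~~ phi_adj e I v1 v4 & ~~ phi_adj e I v2 v4]].

From mathcomp Require Import all_boot.

Set Implicit Arguments.
Unset Strict Implicit.
Unset Printing Implicit Defensive.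

(* Two vertices of I are adjacent in Phi(S) exactly when their neighbourhoods
   are incomparable under inclusion, so the forbidden configuration is a
   statement about the sets Ai = N_i.  Non-adjacency of v2 v4 together with
   d2 <= d4 forces A2 <= A4, and then non-adjacency of v1 v4 forces A1 <= A4.
   As A3 <= A1 <= A4 is excluded, A1 <= A3; as A3 \ A2 is a single vertex
   and A1 is not inside A2, that vertex lies in A1, whence A3 <= A2 u A1 <= A4,
   contradicting the adjacency of v3 and v4. *)

Section SetInclusion.

Variable T : finType.
Implicit Types A B C : {set T}.

Definition comparable_sets A B := (A \subset B) || (B \subset A).

Lemma comparable_sets_card_subset [A B] :
  comparable_sets A B -> #|A| <= #|B| -> A \subset B.
Proof.
case/orP=> // sBA leAB.
by have /eqP -> : B == A by rewrite eqEcard sBA.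
Qed.

Lemma setD_card1_subsetU [A B C] :
  #|C :\: B| = 1 -> A \subset C -> ~~ (A \subset B) -> C \subset B :|: A.
Proof.
move=> /eqP/cards1P[b Eb] sAC /subsetPn[x xA xNB].
have xb : x = b by apply/set1P; rewrite -Eb inE xNB (subsetP sAC).
apply/subsetP=> y yC; rewrite inE; case: (boolP (y \in B)) => //= yNB.
have /set1P -> : y \in [set b] by rewrite -Eb inE yNB.
by rewrite -xb.
Qed.

Lemma comparable_sets_subset34 A1 A2 A3 A4 :
  ~~ comparable_sets A1 A2 ->
  comparable_sets A1 A3 -> comparable_sets A1 A4 -> comparable_sets A2 A4 ->
  #|A3 :\: A2| = 1 -> #|A2| <= #|A4| -> A3 \subset A4.
Proof.
move=> n12 c13 c14 c24 A3D2 le24.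
have s24 : A2 \subset A4 by exact: comparable_sets_card_subset.
have s14 : A1 \subset A4.
  case/orP: c14 => // s41.
  by move: n12; rewrite /comparable_sets (subset_trans s24 s41) orbT.
case/orP: c13 => [s13|s31]; last exact: subset_trans s31 s14.
have nA1A2 : ~~ (A1 \subset A2) by move: n12; rewrite negb_or => /andP[].
apply: subset_trans (setD_card1_subsetU A3D2 s13 nA1A2) _.
by rewrite subUset s24.
Qed.

End SetInclusion.

Lemma sigmaE (T : finType) (e : rel T) (u v : T) :
  sigma e u v = #|nbhd e u :\: nbhd e v| * #|nbhd e v :\: nbhd e u|.
Proof. by rewrite /sigma /eta /deg !cardsD [nbhd e v :&: _]setIC. Qed.

Lemma sigma_eq0 (T : finType) (e : rel T) (u v : T) :
  (sigma e u v == 0) = comparable_sets (nbhd e u) (nbhd e v).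
Proof. by rewrite sigmaE muln_eq0 !cards_eq0 !setD_eq0. Qed.

Lemma phi_adjE (T : finType) (e : rel T) (I : {set T}) (u v : T) :
  u \in I -> v \in I -> u != v ->
  phi_adj e I u v = ~~ comparable_sets (nbhd e u) (nbhd e v).
Proof. by move=> uI vI uv; rewrite /phi_adj uI vI uv lt0n sigma_eq0. Qed.

Theorem lemma4p5 (T : finType) (e : rel T) (K I : {set T}) :
  split_graph e K I ->
  ~ (exists v1 v2 v3 v4 : T,
       [/\ phi_induced_P4 e I v1 v2 v3 v4,
           sigma e v2 v3 = 1,
           deg e v1 <= deg e v2 &
           deg e v2 <= deg e v4]).
Proof.
move=> _ [v1 [v2 [v3 [v4 [[[i1 i2 i3 i4] uniq_v adj nadj] s23 _ d24]]]]].
move: uniq_v; rewrite /= !inE !negb_or.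
case/and4P=> /and3P[ne12 ne13 ne14] /andP[ne23 ne24] ne34 _.
case: adj nadj; rewrite !phi_adjE // => n12 _ n34 [].
rewrite !negbK => c13 c14 c24.
have A3D2 : #|nbhd e v3 :\: nbhd e v2| = 1.
  by move: s23; rewrite sigmaE => /eqP; rewrite muln_eq1 => /andP[_ /eqP].
have s34 := comparable_sets_subset34 n12 c13 c14 c24 A3D2 d24.
by rewrite /comparable_sets s34 in n34.
Qed.
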